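(* Let $m$ and $c$ be positive integers, and for $0\le k\le n$ let $T_{n,k}$ be the number of $(c,m)$-colored $B_n$-partitions with exactly $k$ non-zero-blocks. For every $n\ge 1$, the polynomial $T_n(x)=\sum_{k=0}^n T_{n,k}\,x^k$ has $n$ distinct negative real roots.
   Context: Let $n,m,c$ be positive integers, let $C_1$ be a list of $c$ colors and $C_2$ a list of $m$ colors. A $(c,m)$-colored $B_n$-partition is a set partition $\pi$ of $[n]\cup\{0\}$ together with a coloring of the elements of $[n]$ defined as follows. For $x\in[n]\cup\{0\}$ let $b_x$ be the block of $\pi$ containing $x$. The block $b_0$ is called the zero-block, and every other block is a non-zero-block. Each $x\in[n]$ receives a color according to these rules: if $x=\min b_x$, then $x$ gets the first color of $C_2$; if $x\ne\min b_x$ and $x\in b_0$, then $x$ gets an arbitrary color from $C_1$; if $x\ne \min b_x$ and $x\notin b_0$, then $x$ gets an arbitrary color from $C_2$. Two such objects are equal exactly when they have the same underlying partition and the same coloring. (Note that when $0$ is the minimum of $b_0$, every element of $b_0\setminus\{0\}$ is colored from $C_1$.) *)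

From mathcomp Require Import all_boot all_order all_algebra.
From mathcomp Require Import reals.
Unset Printing Implicit Defensive.

(* Ground set [n] ∪ {0} is encoded as 'I_n.+1 (element 0 is ord0).
   Colors: a color from C1 is  inl i  (i : 'I_c), a color from C2 is
   inr j (j : 'I_m); the first color of C2 is  inr j  with val j = 0. *)

Definition color (c m : nat) := ('I_c + 'I_m)%type.

Definition is_first_C2 (c m : nat) (a : color c m) : bool :=
  if a is inr j then val j == 0 else false.
Definition is_C1 (c m : nat) (a : color c m) : bool :=
  if a is inl _ then true else false.
Definition is_C2 (c m : nat) (a : color c m) : bool :=
  if a is inr _ then true else false.

Definition is_block_min (n : nat) (P : {set {set 'I_n.+1}}) (x : 'I_n.+1) : bool :=
  [forall y in pblock P x, (x <= y)%N].

(* Element 0 carries no color in the paper; to get a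
   bijective encoding we fix f 0 to be the first color of C2 (0 is always the
   minimum of the zero-block, so the "minimum" rule gives exactly this). *)
Definition colored_Bpartition (c m n : nat)
  (X : {set {set 'I_n.+1}} * {ffun 'I_n.+1 -> color c m}) : bool :=
  let P := X.1 in let f := X.2 in
  partition P [set: 'I_n.+1] &&
  [forall x : 'I_n.+1,
     if is_block_min n P x then is_first_C2 c m (f x)
     else if x \in pblock P ord0 then is_C1 c m (f x)
     else is_C2 c m (f x)].

(* T_{n,k}: number of (c,m)-colored B_n-partitions with exactly k
   non-zero-blocks, i.e. with k+1 blocks in total. *)
Definition T (c m n k : nat) : nat :=
  #|[set X | colored_Bpartition c m n X && (#|X.1| == k.+1)]|.

Local Open Scope ring_scope.

Definition Tpoly (R : realType) (c m n : nat) : {poly R} :=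
  \poly_(k < n.+1) (T c m n k)%:R.

From mathcomp Require Import all_boot all_order all_algebra.
From mathcomp Require Import reals polyrcf ring zify.
Set Implicit Arguments. Unset Strict Implicit. Unset Printing Implicit Defensive.

(* Encode a colored B_n-partition by the map sending each element to the
   minimum of its block, together with the coloring.  Adding the element n+1
   either opens a new block (one way) or joins one of the k+1 blocks (c colors
   for the zero-block, m for the others), whence
   T_{n+1,k} = (c + m k) T_{n,k} + T_{n,k-1}, that is
   T_{n+1}(x) = (x + c) T_n(x) + m x T_n'(x).
   If T_n = a (x - s_1) ... (x - s_n) with s_1 < ... < s_n < 0, then
   T_{n+1}(s_i) = m s_i T_n'(s_i) alternates in sign, T_{n+1}(0) = c T_n(0) > 0
   and T_{n+1} has sign (-1)^(n+1) near -oo, so the intermediate value theorem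
   gives n+1 negative roots of T_{n+1}, one in each gap. *)

Section BlockMinimum.
Variables (n : nat) (P : {set {set 'I_n.+1}}).
Hypothesis partP : partition P [set: 'I_n.+1].

Definition pmin (x : 'I_n.+1) : 'I_n.+1 := [arg min_(y < x in pblock P x) (y : nat)].

Let P_trivI : trivIset P. Proof. exact: partition_trivIset partP. Qed.
Let mem_cover x : x \in cover P. Proof. by rewrite (cover_partition partP) inE. Qed.

Lemma mem_pblock_self x : x \in pblock P x.
Proof. by rewrite mem_pblock. Qed.

Lemma pmin_mem x : pmin x \in pblock P x.
Proof. by rewrite /pmin; case: arg_minnP => //; apply: mem_pblock_self. Qed.

Lemma pmin_min x y : y \in pblock P x -> (pmin x <= y)%N.
Proof.
by rewrite /pmin; case: arg_minnP => [|z _ z_min]; [apply: mem_pblock_self | apply: z_min].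
Qed.

Lemma pmin_leq x : (pmin x <= x)%N.
Proof. exact/pmin_min/mem_pblock_self. Qed.

Lemma pmin_unique x z : z \in pblock P x ->
  (forall y, y \in pblock P x -> (z <= y)%N) -> pmin x = z.
Proof. by move=> zx z_min; apply/val_inj/eqP; rewrite eqn_leq pmin_min // z_min ?pmin_mem. Qed.

Lemma mem_pblock_pmin x y : (y \in pblock P x) = (pmin y == pmin x).
Proof.
apply/idP/eqP => [yx|eq_min].
  by apply: pmin_unique; rewrite (same_pblock P_trivI yx); [apply: pmin_mem | apply: pmin_min].
have := pmin_mem y; rewrite eq_min => xy_min.
by rewrite -(same_pblock P_trivI (pmin_mem x)) (same_pblock P_trivI xy_min) mem_pblock_self.
Qed.

Lemma pminK x : pmin (pmin x) = pmin x.
Proof. by apply/eqP; rewrite -mem_pblock_pmin pmin_mem. Qed.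

Lemma is_block_minE x : is_block_min n P x = (pmin x == x).
Proof.
apply/forallP/eqP => [x_min|x_fix y].
  apply/val_inj/eqP; rewrite eqn_leq pmin_leq.
  by have /implyP := x_min (pmin x); apply; apply: pmin_mem.
by apply/implyP => yx; rewrite -x_fix; apply: pmin_min.
Qed.

Lemma mem_pblock0 x : (x \in pblock P ord0) = (pmin x == ord0).
Proof.
rewrite mem_pblock_pmin; congr (_ == _).
by apply/val_inj/eqP; rewrite -leqn0 pmin_leq.
Qed.

Lemma card_partition_pmin : #|P| = #|[set x | pmin x == x]|.
Proof.
have -> : P = pblock P @: [set x | pmin x == x].
  apply/setP => B; apply/idP/imsetP => [BP|[x _ ->]]; last by rewrite pblock_mem.
  have /set0Pn[y yB] : B != set0 by apply: (partition_neq0 partP).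
  exists (pmin y); first by rewrite inE pminK.
  by rewrite -(def_pblock P_trivI BP yB) (same_pblock P_trivI (pmin_mem y)).
apply: card_in_imset => x y; rewrite !inE => /eqP x_min /eqP y_min eq_blocks.
by apply/eqP; rewrite -x_min -y_min -mem_pblock_pmin -eq_blocks mem_pblock_self.
Qed.

End BlockMinimum.

Section Codes.
Variables (c m : nat).
Local Notation code n := ({ffun 'I_n.+1 -> 'I_n.+1} * {ffun 'I_n.+1 -> color c m})%type.

(* [X.1] is to be the block-minimum map and [X.2] the coloring. *)
Definition is_code n (X : code n) :=
  [forall x, (X.1 x <= x)%N && (X.1 (X.1 x) == X.1 x)] &&
  [forall x, if X.1 x == x then is_first_C2 c m (X.2 x)
             else if X.1 x == ord0 then is_C1 c m (X.2 x) else is_C2 c m (X.2 x)].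

Definition nfix n (g : {ffun 'I_n.+1 -> 'I_n.+1}) := #|[set x | g x == x]|.

Definition codes n j := [set X : code n | is_code X && (nfix X.1 == j)].

Definition code_of_partition n
    (X : {set {set 'I_n.+1}} * {ffun 'I_n.+1 -> color c m}) : code n :=
  ([ffun x => pmin X.1 x], X.2).

Variable n : nat.
Implicit Type X : {set {set 'I_n.+1}} * {ffun 'I_n.+1 -> color c m}.

Lemma is_code_of_partition X : colored_Bpartition c m n X -> is_code (code_of_partition X).
Proof.
case/andP => partX /forallP X_col; apply/andP; split; apply/forallP => x /=; rewrite !ffunE.
  by rewrite pmin_leq // pminK ?eqxx.
by rewrite -is_block_minE // -mem_pblock0 //; apply: X_col.
Qed.

Lemma nfix_code_of_partition X : partition X.1 [set: 'I_n.+1] ->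
  nfix (code_of_partition X).1 = #|X.1|.
Proof.
by move=> partX; rewrite (card_partition_pmin partX); apply: eq_card => x; rewrite !inE ffunE.
Qed.

Lemma code_of_partition_inj :
  {in colored_Bpartition c m n &, injective (@code_of_partition n)}.
Proof.
move=> [P f] [Q f'] /andP[/= partP _] /andP[/= partQ _] [eq_pmin ->]; congr (_, _).
have {}eq_pmin x : pmin P x = pmin Q x by rewrite -[LHS]ffunE eq_pmin ffunE.
rewrite -(equivalence_partition_pblock partP) -(equivalence_partition_pblock partQ).
apply: eq_imset => x; apply/setP => y.
by rewrite !inE !mem_pblock_pmin // !eq_pmin.
Qed.

Lemma code_of_partition_onto G : is_code G ->
  exists2 X, colored_Bpartition c m n X & G = code_of_partition X.
Proof.
case: G => g f /andP[/forallP g_retr /forallP f_col].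
pose same_g (x y : 'I_n.+1) := g y == g x.
have same_g_equiv : {in [set: 'I_n.+1] & &, equivalence_rel same_g}.
  by move=> x y z _ _ _; rewrite /same_g eqxx; split=> // /eqP ->.
pose P := equivalence_partition same_g [set: 'I_n.+1].
have partP : partition P [set: 'I_n.+1] := equivalence_partitionP same_g_equiv.
have mem_pblockP x y : (y \in pblock P x) = same_g x y.
  exact: pblock_equivalence_partition.
have pmin_g x : pmin P x = g x.
  apply: pmin_unique => //; first by rewrite mem_pblockP /same_g; case/andP: (g_retr x).
  by move=> y; rewrite mem_pblockP => /eqP <-; case/andP: (g_retr y).
have -> : g = [ffun x => pmin P x] by apply/ffunP => x; rewrite ffunE pmin_g.
exists (P, f) => //; rewrite /colored_Bpartition partP; apply/forallP => x /=.
by rewrite is_block_minE // mem_pblock0 // !pmin_g; apply: f_col.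
Qed.

Lemma T_codes k : T c m n k = #|codes n k.+1|.
Proof.
rewrite /T -(card_in_imset (f := @code_of_partition n)); last first.
  by move=> X Y; rewrite !inE => /andP[X_col _] /andP[Y_col _]; apply: code_of_partition_inj.
apply: eq_card => G; apply/imsetP/idP => [[X] |G_code].
  rewrite !inE => /andP[X_col /eqP card_X] ->.
  have [partX _] := andP X_col.
  by rewrite is_code_of_partition // nfix_code_of_partition // card_X eqxx.
move: G_code; rewrite inE => /andP[/code_of_partition_onto[X X_col ->] nfix_X].
have [partX _] := andP X_col.
by exists X; rewrite // inE X_col -nfix_code_of_partition.
Qed.

End Codes.

Lemma card_set_sumE (T : finType) (P : pred T) : #|[set x | P x]| = \sum_x (P x : nat).
Proof. by rewrite -sum1dep_card big_mkcond /=; apply: eq_bigr => x _; case: (P x). Qed.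

Section LiftMax.
Variable n : nat.
Local Notation up := (lift (@ord_max n.+1)).

Lemma forall_lift_max (P : pred 'I_n.+2) :
  [forall x, P x] = [forall y, P (up y)] && P ord_max.
Proof.
apply/forallP/andP => [P_all|[/forallP P_up P_max] x]; first by split=> //; apply/forallP.
by case: (unliftP ord_max x) => [y ->|->].
Qed.

Lemma sum_lift_max (F : 'I_n.+2 -> nat) : (\sum_x F x = \sum_y F (up y) + F ord_max)%N.
Proof.
rewrite big_ord_recr /=; congr (_ + _)%N.
by apply: eq_bigr => i _; congr (F _); apply/val_inj; rewrite [RHS]lift_max.
Qed.

Lemma lift_max_eq0 (y : 'I_n.+1) : (up y == ord0) = (y == ord0).
Proof. by rewrite -!val_eqE [X in X == _]lift_max. Qed.

End LiftMax.

Section ColorCounts.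
Variables (c m : nat).

Lemma sum_is_C1 : (\sum_(b : color c m) is_C1 c m b)%N = c.
Proof. by rewrite big_sumType /= big_const_ord iter_addn_0 mul1n big1 // addn0. Qed.

Lemma sum_is_C2 : (\sum_(b : color c m) is_C2 c m b)%N = m.
Proof. by rewrite big_sumType /= !big_const_ord !iter_addn_0 mul1n. Qed.

Lemma sum_is_first_C2 : (0 < m)%N -> (\sum_(b : color c m) is_first_C2 c m b)%N = 1%N.
Proof. by case: m => // m' _; rewrite big_sumType /= big1 // add0n big_ord_recl /= big1. Qed.

End ColorCounts.

Section Extension.
Variables (c m n : nat).
Local Notation code k := ({ffun 'I_k.+1 -> 'I_k.+1} * {ffun 'I_k.+1 -> color c m})%type.
Local Notation up := (lift (@ord_max n.+1)).

Definition extend (Z : code n * ('I_n.+2 * color c m)) : code n.+1 :=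
  ([ffun x => if unlift ord_max x is Some y then up (Z.1.1 y) else Z.2.1],
   [ffun x => if unlift ord_max x is Some y then Z.1.2 y else Z.2.2]).

(* The new element [ord_max] opens a block ([ab.1 = ord_max]) or joins the
   block of minimum [a]. *)
Definition new_point_ok (X : code n) (ab : 'I_n.+2 * color c m) :=
  if unlift ord_max ab.1 is Some a then
    (X.1 a == a) && (if a == ord0 then is_C1 c m ab.2 else is_C2 c m ab.2)
  else is_first_C2 c m ab.2.

Lemma extend1_up Z y : (extend Z).1 (up y) = up (Z.1.1 y).
Proof. by rewrite ffunE liftK. Qed.

Lemma extend2_up Z y : (extend Z).2 (up y) = Z.1.2 y.
Proof. by rewrite ffunE liftK. Qed.

Lemma extend1_max Z : (extend Z).1 ord_max = Z.2.1.
Proof. by rewrite ffunE unlift_none. Qed.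

Lemma extend2_max Z : (extend Z).2 ord_max = Z.2.2.
Proof. by rewrite ffunE unlift_none. Qed.

Lemma is_code_extend Z : is_code (extend Z) = is_code Z.1 && new_point_ok Z.1 Z.2.
Proof.
have up_inj := inj_eq (@lift_inj _ (@ord_max n.+1)).
have retr_up y :
    ((extend Z).1 (up y) <= up y)%N && ((extend Z).1 ((extend Z).1 (up y)) == (extend Z).1 (up y))
    = (Z.1.1 y <= y)%N && (Z.1.1 (Z.1.1 y) == Z.1.1 y).
  by rewrite !extend1_up !lift_max up_inj.
have col_up y :
    (if (extend Z).1 (up y) == up y then is_first_C2 c m ((extend Z).2 (up y))
     else if (extend Z).1 (up y) == ord0 then is_C1 c m ((extend Z).2 (up y))
     else is_C2 c m ((extend Z).2 (up y))) =
    (if Z.1.1 y == y then is_first_C2 c m (Z.1.2 y)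
     else if Z.1.1 y == ord0 then is_C1 c m (Z.1.2 y) else is_C2 c m (Z.1.2 y)).
  by rewrite extend1_up extend2_up up_inj lift_max_eq0.
rewrite /is_code /new_point_ok !forall_lift_max (eq_forallb retr_up) (eq_forallb col_up).
rewrite !extend1_max !extend2_max leq_ord andTb.
case: (unliftP ord_max Z.2.1) => [a|] a_eq; rewrite a_eq.
  by rewrite extend1_up up_inj lift_eqF lift_max_eq0 andbACA.
by rewrite extend1_max a_eq !eqxx andbT andbA.
Qed.

Lemma nfix_extend Z : nfix (extend Z).1 = (nfix Z.1.1 + (Z.2.1 == ord_max))%N.
Proof.
rewrite /nfix !card_set_sumE sum_lift_max extend1_max; congr (_ + _)%N.
by apply: eq_bigr => y _; rewrite extend1_up (inj_eq (@lift_inj _ ord_max)).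
Qed.

Lemma extend_inj : injective extend.
Proof.
move=> [[g f] [a b]] [[g' f'] [a' b']] eq_ext.
have eq_g : g = g'.
  apply/ffunP => y; apply: (@lift_inj _ ord_max).
  by have := extend1_up (g, f, (a, b)) y; rewrite eq_ext extend1_up.
have eq_f : f = f'.
  by apply/ffunP => y; have := extend2_up (g, f, (a, b)) y; rewrite eq_ext extend2_up.
have := extend1_max (g, f, (a, b)); have := extend2_max (g, f, (a, b)).
by rewrite eq_ext extend1_max extend2_max eq_g eq_f => /= -> ->.
Qed.

Lemma extend_onto (X : code n.+1) : is_code X -> exists Z, X = extend Z.
Proof.
case: X => g f /andP[/forallP g_retr _].
have g_up_small y : (g (up y) < n.+1)%N.
  by case/andP: (g_retr (up y)) => le_g _; rewrite (leq_ltn_trans le_g) // lift_max.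
exists (([ffun y => inord (g (up y))], [ffun y => f (up y)]), (g ord_max, f ord_max)).
congr (_, _); apply/ffunP => x; rewrite !ffunE.
  case: (unliftP ord_max x) => [y ->|->] //; rewrite ffunE.
  by apply/val_inj; rewrite [RHS]lift_max inordK.
by case: (unliftP ord_max x) => [y ->|->] //; rewrite ffunE.
Qed.

Lemma codes_extend j : codes c m n.+1 j =
  extend @: [set Z | is_code Z.1 && new_point_ok Z.1 Z.2 && (nfix Z.1.1 + (Z.2.1 == ord_max) == j)].
Proof.
apply/setP => X; rewrite inE; apply/idP/imsetP => [/andP[X_code X_nfix]|[Z]].
  have [Z def_X] := extend_onto X_code; exists Z => //.
  by rewrite inE -is_code_extend -nfix_extend -def_X X_code.
by rewrite inE => Z_ok ->; rewrite is_code_extend nfix_extend.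
Qed.

Lemma code_fix0 (X : code n) : is_code X -> X.1 ord0 = ord0.
Proof.
by case/andP => /forallP/(_ ord0)/andP[le_g0 _] _; apply/val_inj/eqP; rewrite -leqn0.
Qed.

Lemma sum_fixed_weights (g : {ffun 'I_n.+1 -> 'I_n.+1}) : g ord0 = ord0 ->
  (\sum_y (g y == y) * (if y == ord0 then c else m) = c + m * (nfix g).-1)%N.
Proof.
move=> g0; rewrite (bigD1 ord0) //= g0 eqxx mul1n; congr (_ + _)%N.
rewrite (eq_bigr (fun y => (g y == y) * m)%N) => [|y /negbTE -> //].
rewrite -big_distrl /= mulnC /nfix card_set_sumE [in RHS](bigD1 ord0) //=.
by rewrite g0 eqxx.
Qed.

Lemma card_new_point (X : code n) j : (0 < m)%N -> is_code X ->
  (\sum_ab (new_point_ok X ab && (nfix X.1 + (ab.1 == ord_max) == j)))%N =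
  ((nfix X.1 == j) * (c + m * (nfix X.1).-1) + (nfix X.1 + 1 == j))%N.
Proof.
move=> m_gt0 X_code.
transitivity (\sum_a \sum_b
    (new_point_ok X (a, b) && (nfix X.1 + (a == ord_max) == j) : nat))%N.
  by rewrite pair_bigA; apply: eq_bigr => -[].
rewrite sum_lift_max; congr (_ + _)%N.
  rewrite -sum_fixed_weights ?code_fix0 // big_distrr /=; apply: eq_bigr => y _.
  rewrite /new_point_ok /= liftK lift_eqF addn0.
  case: (X.1 y == y); case: (nfix X.1 == j); rewrite /= ?muln0 ?mul0n;
    try by rewrite big1 // => b _; rewrite andbF.
  under eq_bigr => b _ do rewrite andbT.
  by rewrite !mul1n; case: (y == ord0); [exact: sum_is_C1 | exact: sum_is_C2].
rewrite /new_point_ok /= unlift_none eqxx addn1.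
case: (_ == j); last by rewrite big1 // => b _; rewrite andbF.
under eq_bigr => b _ do rewrite andbT.
exact: sum_is_first_C2.
Qed.

Lemma card_codesS k : (0 < m)%N ->
  #|codes c m n.+1 k.+1| = ((c + m * k) * #|codes c m n k.+1| + #|codes c m n k|)%N.
Proof.
move=> m_gt0; rewrite codes_extend card_imset ?card_set_sumE; last exact: extend_inj.
transitivity (\sum_X \sum_ab
    (is_code X && new_point_ok X ab && (nfix X.1 + (ab.1 == ord_max) == k.+1) : nat))%N.
  by rewrite pair_bigA; apply: eq_bigr => -[].
rewrite big_distrr -big_split /=; apply: eq_bigr => X _.
case X_code: (is_code X) => /=; last by rewrite big1 ?muln0.
rewrite card_new_point // addn1 eqSS mulnC; congr (_ + _)%N.
by case: eqP => [-> //|]; rewrite !muln0.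
Qed.

End Extension.

Section Recurrence.
Variables (c m : nat).
Hypothesis m_gt0 : (0 < m)%N.

Lemma codes0 n : codes c m n 0 = set0.
Proof.
apply/setP => X; rewrite !inE; apply/negbTE/andP => -[X_code].
rewrite cards_eq0 => /eqP/setP/(_ ord0).
by rewrite !inE code_fix0 ?eqxx.
Qed.

Lemma T_eq0 n k : (n < k)%N -> T c m n k = 0%N.
Proof.
move=> lt_n_k; rewrite T_codes; apply/eqP; rewrite cards_eq0; apply/eqP/setP => X.
rewrite !inE; apply/negbTE/andP => -[_ /eqP nfix_X].
have := max_card [set x | X.1 x == x].
by rewrite card_ord -/(nfix X.1) nfix_X ltnS leqNgt lt_n_k.
Qed.

Lemma T_recS n k :
  T c m n.+1 k = ((c + m * k) * T c m n k + (if k is k'.+1 then T c m n k' else 0))%N.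
Proof. by rewrite !T_codes card_codesS //; case: k => [|k]; rewrite ?codes0 ?cards0 ?T_codes. Qed.

Lemma T00_gt0 : (0 < T c m 0 0)%N.
Proof.
rewrite T_codes; apply/card_gt0P; exists ([ffun x => x], [ffun _ => inr (Ordinal m_gt0)]).
rewrite !inE /is_code -andbA; apply/and3P; split;
  try by apply/forallP => x; rewrite /= !ffunE ?eqxx ?leqnn.
by apply/eqP; rewrite -[RHS](card_ord 1); apply: eq_card => x; rewrite !inE ffunE eqxx.
Qed.

End Recurrence.

Import Order.TTheory GRing.Theory Num.Theory.
Local Open Scope ring_scope.

Lemma deriv_prod_XsubC_at (R : comNzRingType) (s1 s2 : seq R) (z : R) :
  (\prod_(w <- s1 ++ z :: s2) ('X - w%:P))^`().[z] = \prod_(w <- s1 ++ s2) (z - w).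
Proof.
rewrite !big_cat big_cons /= mulrCA derivM hornerD !hornerM.
rewrite hornerXsubC subrr mul0r addr0 derivXsubC hornerC mul1r -hornerM.
by rewrite -!big_cat horner_prod; apply: eq_bigr => w _; rewrite hornerXsubC.
Qed.

Section SignChanges.
Variable R : rcfType.
Implicit Types (p : {poly R}) (s : seq R).

Lemma prod_subr_gt0 (z : R) s : all (fun w => w < z) s -> 0 < \prod_(w <- s) (z - w).
Proof.
elim: s => [|w s IHs] /=; first by rewrite big_nil ltr01.
by case/andP => wz /IHs; rewrite big_cons; apply: mulr_gt0; rewrite subr_gt0.
Qed.

Lemma signr_prod_subr_gt0 (z : R) s : all (fun w => z < w) s ->
  0 < (-1) ^+ size s * \prod_(w <- s) (z - w).
Proof.
elim: s => [|w s IHs] /=; first by rewrite big_nil mulr1 ltr01.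
case/andP => zw /IHs; rewrite big_cons exprS mulrACA; apply: mulr_gt0.
by rewrite mulN1r opprB subr_gt0.
Qed.

Lemma sign_deriv_prod_XsubC s i : sorted <%R s -> (i < size s)%N ->
  0 < (-1) ^+ (size s - i.+1) * (\prod_(w <- s) ('X - w%:P))^`().[s`_i].
Proof.
move=> s_sorted lt_i_s; set z := s`_i.
have def_s : s = take i s ++ z :: drop i.+1 s by rewrite -drop_nth // cat_take_drop.
have := deriv_prod_XsubC_at (take i s) (drop i.+1 s) z; rewrite -def_s => ->.
rewrite (sorted_pairwise (@lt_trans _ R)) def_s pairwise_cat in s_sorted.
case/and3P: s_sorted => /allrelP lt_take _ /= /andP[lt_drop _].
rewrite big_cat /= mulrCA -size_drop mulr_gt0 ?signr_prod_subr_gt0 // prod_subr_gt0 //.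
by apply/allP => w w_take; apply: lt_take; rewrite ?inE ?eqxx.
Qed.

Lemma sign_near_minfty p b : p != 0 ->
  exists2 y, y <= b & 0 < (-1) ^+ (size p).-1 * lead_coef p * p.[y].
Proof.
move=> p_neq0; set y := Num.min b (- cauchy_bound p).
exists y; first by rewrite ge_min lexx.
have sg_py : Num.sg p.[y] = sgp_minfty p.
  by rewrite (sgp_minftyP (le_cauchy_bound p_neq0)) // in_itv /= ge_min lexx orbT.
have e_neq0 : (-1) ^+ (size p).-1 * lead_coef p != 0.
  by rewrite mulf_neq0 ?signr_eq0 ?lead_coef_eq0.
by rewrite -sgr_cp0 sgrM sg_py /sgp_minfty -expr2 sqr_sg e_neq0.
Qed.

Lemma roots_in_sign_changes p (x : R) (xs : seq R) (b : nat) :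
  path <%R x xs ->
  (forall j, (j <= size xs)%N -> 0 < (-1) ^+ (b + j) * p.[nth 0 (x :: xs) j]) ->
  exists2 t, [/\ size t = size xs, sorted <%R t & all (root p) t] &
             all (fun y => x < y < last x xs) t.
Proof.
elim: xs x b => [|y xs IHxs] x b /=; first by move=> _ _; exists [::].
case/andP => lt_xy y_xs sign_p.
have px_py : p.[x] * p.[y] < 0.
  have := mulr_gt0 (sign_p 0%N isT) (sign_p 1%N isT).
  rewrite /= addn0 mulrACA -exprD addnA addnn addn1 -signr_odd /= odd_double.
  by rewrite expr1 mulN1r oppr_gt0.
have [t0 t0_in root_t0] := poly_ivtoo (ltW lt_xy) px_py.
move: t0_in; rewrite in_itv /= => /andP[lt_x_t0 lt_t0_y].
have [|t [size_t sorted_t roots_t] t_in] := IHxs y b.+1 y_xs.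
  by move=> j le_j; rewrite addSnnS; apply: (sign_p j.+1).
have le_y_last : y <= last y xs.
  have /predU1P[-> //|/(allP (order_path_min (@lt_trans _ R) y_xs))/ltW //] := mem_last y xs.
exists (t0 :: t).
  split; rewrite /= ?size_t ?root_t0 //.
  rewrite (path_sortedE (@lt_trans _ R)) sorted_t andbT.
  by apply: sub_all t_in => z /andP[/(lt_trans lt_t0_y)].
rewrite /= lt_x_t0 (lt_le_trans lt_t0_y) //=.
by apply: sub_all t_in => z /andP[/(lt_trans lt_xy) -> ->].
Qed.

End SignChanges.

Definition euler_step (R : nzRingType) (c m : R) (p : {poly R}) : {poly R} :=
  ('X + c%:P) * p + m *: ('X * p^`()).

Lemma euler_stepZ (R : comNzRingType) (c m a : R) p :
  euler_step c m (a *: p) = a *: euler_step c m p.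
Proof. by rewrite /euler_step derivZ scalerDr -!scalerAr !scalerA [m * a]mulrC. Qed.

Lemma horner_euler_step (R : comNzRingType) (c m x : R) p :
  (euler_step c m p).[x] = (x + c) * p.[x] + m * x * p^`().[x].
Proof. by rewrite /euler_step !hornerE. Qed.

Section EulerStepRoots.
Variables (R : rcfType) (c m : R) (s : seq R).
Hypotheses (c_gt0 : 0 < c) (m_gt0 : 0 < m).
Hypotheses (s_sorted : sorted <%R s) (s_neg : all (fun x => x < 0) s).

Local Notation p := (\prod_(z <- s) ('X - z%:P)).
Local Notation q := (euler_step c m p).

Let p_monic : p \is monic. Proof. exact: monic_prod_XsubC. Qed.
Let Xc_p_monic : ('X + c%:P) * p \is monic. Proof. by rewrite monicMl ?monicXaddC. Qed.

Let size_Xc_p : size (('X + c%:P) * p) = (size s).+2.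
Proof. by rewrite size_Mmonic ?monic_neq0 ?monicXaddC // size_XaddC size_prod_XsubC. Qed.

Let size_deriv_term : (size (m *: ('X * p^`())) < (size s).+2)%N.
Proof.
rewrite (leq_ltn_trans (size_scale_leq _ _)) // (leq_ltn_trans (size_polyMleq _ _)) //.
by rewrite size_polyX ltnS -(size_prod_XsubC s id) lt_size_deriv ?monic_neq0.
Qed.

Lemma size_euler_step_prod : size q = (size s).+2.
Proof. by rewrite size_polyDl size_Xc_p. Qed.

Lemma euler_step_prod_monic : q \is monic.
Proof. by rewrite monicE lead_coefDl ?size_Xc_p // (monicP Xc_p_monic). Qed.

Lemma euler_step_prod_sign_at_root i : (i < size s)%N ->
  0 < (-1) ^+ (size s + i) * q.[s`_i].
Proof.
move=> lt_i_s; have s_i_neg : s`_i < 0 by apply: (allP s_neg); rewrite mem_nth.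
have root_p : p.[s`_i] = 0 by apply/rootP; rewrite root_prod_XsubC mem_nth.
have -> : (size s + i = (size s - i.+1) + (i + i).+1)%N by lia.
have sign_odd : (-1) ^+ (i + i).+1 = -1 :> R.
  by rewrite exprS -signr_odd addnn odd_double mulr1.
rewrite horner_euler_step root_p mulr0 add0r exprD sign_odd.
have -> : (-1) ^+ (size s - i.+1) * -1 * (m * s`_i * p^`().[s`_i]) =
    m * - s`_i * ((-1) ^+ (size s - i.+1) * p^`().[s`_i]) by ring.
by rewrite mulr_gt0 ?sign_deriv_prod_XsubC // mulr_gt0 // oppr_gt0.
Qed.

Lemma euler_step_prod_at0_gt0 : 0 < q.[0].
Proof.
rewrite horner_euler_step mulr0 mul0r addr0 add0r horner_prod mulr_gt0 //.
rewrite (eq_bigr (fun w => 0 - w)) => [|w _]; last by rewrite hornerXsubC.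
exact: prod_subr_gt0.
Qed.

Lemma euler_step_prod_neg_roots : exists2 t : seq R,
  [/\ size t = (size s).+1, sorted <%R t & all (fun x => x < 0) t] &
  q = \prod_(z <- t) ('X - z%:P).
Proof.
have q_neq0 : q != 0 by rewrite monic_neq0 ?euler_step_prod_monic.
have [y0 y0_le sign_y0] := sign_near_minfty (head 0 s - 1) q_neq0.
rewrite size_euler_step_prod (monicP euler_step_prod_monic) mulr1 in sign_y0.
have y0_path : path <%R y0 (rcons s 0).
  rewrite rcons_path; case: s s_sorted s_neg y0_le => [|z s'] sorted_s neg_s /= le_y0.
    by rewrite (le_lt_trans le_y0) // subr_lt0 ltr01.
  move: sorted_s => /= ->; rewrite (le_lt_trans le_y0) ?gtrBl ?ltr01 //=.
  by apply: (allP neg_s); rewrite mem_last.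
have [|t [size_t sorted_t roots_t] t_in] :=
  @roots_in_sign_changes _ q _ _ (size s).+1 y0_path.
  rewrite size_rcons; case=> [_|i]; first by rewrite addn0.
  rewrite ltnS leq_eqVlt => /predU1P[->|lt_i_s] /=; rewrite nth_rcons.
    by rewrite ltnn eqxx addnn -signr_odd odd_double expr0 mul1r euler_step_prod_at0_gt0.
  rewrite lt_i_s addSn addnS !exprS !mulN1r opprK.
  exact: euler_step_prod_sign_at_root.
exists t.
  split; rewrite ?size_t ?size_rcons //; apply: sub_all t_in => y.
  by rewrite last_rcons => /andP[].
rewrite [LHS](all_roots_prod_XsubC (rs := t)) ?(monicP euler_step_prod_monic) ?scale1r //.
  by rewrite size_t size_euler_step_prod size_rcons.
by rewrite uniq_rootsE lt_sorted_uniq.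
Qed.

End EulerStepRoots.

Lemma coef_Tpoly (R : realType) c m n k : (Tpoly R c m n)`_k = (T c m n k)%:R.
Proof. by rewrite coef_poly; case: ltnP => // lt_n_k; rewrite T_eq0. Qed.

Lemma Tpoly_recS (R : realType) c m n : (0 < m)%N ->
  Tpoly R c m n.+1 = euler_step c%:R m%:R (Tpoly R c m n).
Proof.
move=> m_gt0; apply/polyP => i.
rewrite /euler_step coefD mulrDl coefD coefXM coefCM coefZ coefXM !coef_Tpoly T_recS //.
case: i => [|i] /=; first by rewrite muln0 !addn0 natrM mulr0 add0r addr0.
rewrite coef_deriv !coef_Tpoly natrD !natrM natrD natrM -mulr_natr.
ring.
Qed.

Lemma Tpoly_neg_rooted (R : realType) c m n : (0 < c)%N -> (0 < m)%N ->
  exists a s, [/\ 0 < a, size s = n, sorted <%R s, all (fun x : R => x < 0) s &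
                  Tpoly R c m n = a *: \prod_(z <- s) ('X - z%:P)].
Proof.
move=> c_gt0 m_gt0; elim: n => [|n [a [s [a_gt0 size_s s_sorted s_neg def_T]]]].
  exists (T c m 0 0)%:R, [::]; split; rewrite ?ltr0n ?T00_gt0 //.
  apply/polyP => i; rewrite coef_Tpoly coefZ big_nil coef1.
  by case: i => [|i]; rewrite ?mulr1 // mulr0 T_eq0.
have c_pos : 0 < c%:R :> R by rewrite ltr0n.
have m_pos : 0 < m%:R :> R by rewrite ltr0n.
have [t [size_t t_sorted t_neg] def_t] :=
  euler_step_prod_neg_roots c_pos m_pos s_sorted s_neg.
exists a, t; split; rewrite ?size_t ?size_s //.
by rewrite Tpoly_recS // def_T euler_stepZ def_t.
Qed.

Theorem theorem2 (R : realType) (c m n : nat) :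
  (0 < c)%N -> (0 < m)%N -> (1 <= n)%N ->
  exists s : seq R,
    [/\ size s = n, uniq s, all (fun x => x < 0) s & all (root (Tpoly R c m n)) s].
Proof.
move=> c_gt0 m_gt0 _.
have [a [s [a_gt0 size_s s_sorted s_neg ->]]] := Tpoly_neg_rooted R n c_gt0 m_gt0.
exists s; split=> //; first exact: lt_sorted_uniq.
by apply/allP => x x_s; rewrite rootZ ?gt_eqF // root_prod_XsubC.
Qed.
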